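(* Let $k$ be a field of characteristic zero, let $n\ge 1$, and let $R$ denote either $k[x_1,\ldots,x_n]$ or $k[[x_1,\ldots,x_n]]$. Let $\mathfrak{D}$ be a set of pairwise commuting $k$-derivations of $R$ such that $R$ is $\mathfrak{D}$-simple and $\partial_{x_1},\ldots,\partial_{x_{n-1}}\in\mathfrak{D}$. Then there exist $d\in\mathfrak{D}$ and elements $f_1,\ldots,f_n\in R$ such that $d(f_n)=1$ and $d(f_i)=0$ for all $i=1,\ldots,n-1$, and such that $R$ is $\{\partial_{x_1},\ldots,\partial_{x_{n-1}},d\}$-simple.
   Context: A $k$-derivation of $R$ is a $k$-linear map satisfying the Leibniz rule. For a family $\mathfrak{D}$ of $k$-derivations, an ideal $I$ is $\mathfrak{D}$-stable if $d(I)\subseteq I$ for all $d\in\mathfrak{D}$, and $R$ is $\mathfrak{D}$-simple if $0$ and $R$ are its only $\mathfrak{D}$-stable ideals. *)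

From HB Require Import structures.
From mathcomp Require Import all_boot all_order all_algebra.
From mathcomp Require Import mpoly.
Set Implicit Arguments. Unset Strict Implicit. Unset Printing Implicit Defensive.
Import Order.TTheory GRing.Theory Num.Theory.
Local Open Scope ring_scope.

Section Generic.
Variables (k : fieldType) (T : Type).
Variables (addT mulT : T -> T -> T) (zeroT : T) (scaleT : k -> T -> T).

Definition is_kderivation (d : T -> T) : Prop :=
  [/\ forall a b, d (addT a b) = addT (d a) (d b),
      forall (c : k) a, d (scaleT c a) = scaleT c (d a)
    & forall a b, d (mulT a b) = addT (mulT a (d b)) (mulT (d a) b)].

(* an ideal of the (commutative) ring T; closure under multiplication by
   the ring element -1 gives closure under negation *)
Definition is_ideal (I : T -> Prop) : Prop :=
  [/\ I zeroT,
      forall a b, I a -> I b -> I (addT a b)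
    & forall r a, I a -> I (mulT r a)].

Definition D_stable (D : (T -> T) -> Prop) (I : T -> Prop) : Prop :=
  forall d, D d -> forall a, I a -> I (d a).

Definition D_simple (D : (T -> T) -> Prop) : Prop :=
  forall I, is_ideal I -> D_stable D I ->
    (forall a, I a <-> a = zeroT) \/ (forall a, I a).

(* The conclusion of Corollary 2.5 for the ring T in n variables, whose
   partial derivatives d/dx_{i+1} are [partial i] for i : 'I_n. *)
Definition corollary2p5_prop (n : nat) (oneT : T) (partial : 'I_n -> T -> T)
  : Prop :=
  forall D : (T -> T) -> Prop,
    (forall d, D d -> is_kderivation d) ->
    (forall d e, D d -> D e -> forall a, d (e a) = e (d a)) ->
    D_simple D ->
    (forall i : 'I_n, (i < n.-1)%N -> D (partial i)) ->
    exists d, D d /\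
      exists f : 'I_n -> T,
        [/\ forall i : 'I_n, (i == n.-1 :> nat) -> d (f i) = oneT,
            forall i : 'I_n, (i < n.-1)%N -> d (f i) = zeroT
          & D_simple (fun e => (exists2 i : 'I_n, (i < n.-1)%N & e = partial i)
                               \/ e = d)].
End Generic.

Section PowerSeries.
Variables (k : fieldType) (n : nat).

Definition pseries := 'X_{1..n} -> k.

Definition ps_add (f g : pseries) : pseries := fun m => f m + g m.
Definition ps_zero : pseries := fun _ => 0.
Definition ps_one : pseries := fun m => if m == 0%MM then 1 else 0.
Definition ps_scale (c : k) (f : pseries) : pseries := fun m => c * f m.
(* (f g)_m = sum_{a <= m} f_a g_{m-a} ; every a <= m has degree <= mdeg m *)
Definition ps_mul (f g : pseries) : pseries := fun m =>
  \sum_(a : 'X_{1..n < (mdeg m).+1} | (val a <= m)%MM)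
     f (val a) * g (m - val a)%MM.
Definition ps_deriv (i : 'I_n) (f : pseries) : pseries :=
  fun m => (m i).+1%:R * f (m + U_(i))%MM.
End PowerSeries.

From HB Require Import structures.
From mathcomp Require Import all_boot all_order all_algebra.
From mathcomp Require Import mpoly.
From mathcomp Require Import boolp.
From mathcomp Require Import zify.
Set Implicit Arguments. Unset Strict Implicit. Unset Printing Implicit Defensive.
Import GRing.Theory.
Local Open Scope ring_scope.

(* Let x be the coordinates and l the index of the last one.  For d, e in D,
   commuting with the first n-1 partial derivatives forces
   partial_i (e (x l)) = 0 for i < n-1, so that
   e (d (x l)) = d (e (x l)) = d (x l) * partial_l (e (x l)): d (x l) is a
   Darboux element, and in a D-simple ring a Darboux element is 0 or a unit.
   If d (x l) vanished for all d in D, then x l would be a nonzero Darboux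
   non-unit, so some d (x l) has an inverse v.  This v is killed by the first
   n-1 partials; an antiderivative f of v along x l gives d f = 1; and as
   partial_l = v d - \sum_(j != l) v d (x j) partial_j, an ideal stable under
   the first n-1 partials and d is stable under all partials, hence is 0 or R.
   Only a few coordinate properties of R are used, and they hold for both
   polynomials and power series. *)

Section Derivations.
Variables (k : fieldType) (R : comAlgType k).
Local Notation is_der := (is_kderivation (@GRing.add R) (@GRing.mul R) (@GRing.scale k R)).
Local Notation is_ideal := (is_ideal (@GRing.add R) (@GRing.mul R) 0).
Local Notation D_simple := (D_simple (@GRing.add R) (@GRing.mul R) 0).

Lemma kderivation0 d : is_der d -> d 0 = 0.
Proof.
case=> dD _ _; have := dD 0 0; rewrite addr0 => d00.
by apply: (addrI (d 0)); rewrite addr0 -d00.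
Qed.

Lemma kderivation1 d : is_der d -> d 1 = 0.
Proof.
case=> _ _ dM; have := dM 1 1; rewrite !mul1r !mulr1 => d11.
by apply: (addrI (d 1)); rewrite addr0 -d11.
Qed.

Lemma kderivation_nat d m : is_der d -> d m%:R = 0.
Proof.
move=> Hd; have [dD _ _] := Hd.
by elim: m => [|m IHm]; rewrite ?kderivation0 // -addn1 natrD dD IHm kderivation1 ?addr0.
Qed.

Lemma kderivation_sum d (I : Type) (r : seq I) (P : pred I) (F : I -> R) :
  is_der d -> d (\sum_(i <- r | P i) F i) = \sum_(i <- r | P i) d (F i).
Proof.
move=> Hd; have [dD _ _] := Hd.
by elim/big_rec2: _ => [|i y1 y2 _ <-]; [exact: kderivation0 | rewrite dD].
Qed.

Lemma ideal_sum I (J : Type) (r : seq J) (P : pred J) (F : J -> R) :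
  is_ideal I -> (forall j, P j -> I (F j)) -> I (\sum_(j <- r | P j) F j).
Proof. by case=> I0 ID _ IF; elim/big_ind: _. Qed.

Lemma ideal_opp I r : is_ideal I -> I r -> I (- r).
Proof. by case=> _ _ IM Ir; rewrite -mulN1r; exact: IM. Qed.

Lemma ideal_eq1 I : is_ideal I -> I 1 -> forall r, I r.
Proof. by case=> _ _ IM I1 r; rewrite -[r]mulr1; exact: IM. Qed.

Definition multiples (a : R) (r : R) : Prop := exists s, r = s * a.

Lemma multiples_ideal a : is_ideal (multiples a).
Proof.
split; first by exists 0; rewrite mul0r.
  by move=> _ _ [s1 ->] [s2 ->]; exists (s1 + s2); rewrite mulrDl.
by move=> r _ [s ->]; exists (r * s); rewrite mulrA.
Qed.

Lemma darboux_eq0_or_unit D a : (forall e, D e -> is_der e) -> D_simple D ->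
  (forall e, D e -> exists c, e a = c * a) -> a = 0 \/ exists s, s * a = 1.
Proof.
move=> D_der Dsimple darboux.
have stable : D_stable D (multiples a).
  move=> e De _ [s ->]; have [_ _ eM] := D_der e De.
  rewrite eM; have [c ->] := darboux e De.
  by exists (s * c + e s); rewrite mulrDl mulrA.
case: (Dsimple _ (multiples_ideal a) stable) => [zero|whole].
  by left; apply/(zero a); exists 1; rewrite mul1r.
by right; have [s ->] := whole 1; exists s.
Qed.

End Derivations.

Section Coordinates.
Variables (k : fieldType) (R : comAlgType k) (n : nat).
Variables (partial : 'I_n -> R -> R) (x : 'I_n -> R).
Local Notation is_der := (is_kderivation (@GRing.add R) (@GRing.mul R) (@GRing.scale k R)).
Local Notation is_ideal := (is_ideal (@GRing.add R) (@GRing.mul R) 0).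
Local Notation D_simple := (D_simple (@GRing.add R) (@GRing.mul R) 0).

Hypothesis partial_kderivation : forall i, is_der (partial i).
Hypothesis partial_coord : forall i j, partial i (x j) = (i == j)%:R.
Hypothesis kderivation_coord_eq0 :
  forall d, is_der d -> (forall j, d (x j) = 0) -> forall r, d r = 0.

Lemma kderivation_expand d : is_der d -> forall r, d r = \sum_j d (x j) * partial j r.
Proof.
move=> Hd r; have [dD dZ dM] := Hd.
pose rest r := d r - \sum_j d (x j) * partial j r.
suff : rest r = 0 by move/eqP; rewrite subr_eq0 => /eqP.
apply: kderivation_coord_eq0; last first.
  move=> j; rewrite /rest (bigD1 j) //= partial_coord eqxx mulr1 big1 ?addr0 ?subrr // => i.
  by rewrite partial_coord => /negbTE->; rewrite mulr0.
have sumD a b : \sum_j d (x j) * partial j (a + b) =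
    \sum_j d (x j) * partial j a + \sum_j d (x j) * partial j b.
  rewrite -big_split; apply: eq_bigr => j _.
  by have [pD _ _] := partial_kderivation j; rewrite pD mulrDr.
have sumZ c a : \sum_j d (x j) * partial j (c *: a) = c *: \sum_j d (x j) * partial j a.
  rewrite scaler_sumr; apply: eq_bigr => j _.
  by have [_ pZ _] := partial_kderivation j; rewrite pZ scalerAr.
have sumM a b : \sum_j d (x j) * partial j (a * b) =
    a * \sum_j d (x j) * partial j b + (\sum_j d (x j) * partial j a) * b.
  rewrite mulr_sumr mulr_suml -big_split; apply: eq_bigr => j _.
  have [_ _ pM] := partial_kderivation j.
  by rewrite pM mulrDr; congr (_ + _); [rewrite mulrCA | rewrite mulrA].
split=> [a b|c a|a b]; rewrite /rest.
- by rewrite dD sumD opprD addrACA.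
- by rewrite dZ sumZ scalerBr.
- by rewrite dM sumM mulrBr mulrBl opprD addrACA.
Qed.

Variable l : 'I_n.
Hypothesis l_last : val l = n.-1.

Lemma ord_split_last (j : 'I_n) : (j < n.-1)%N \/ j = l.
Proof.
case: (ltnP j n.-1) => lt_j; [by left | right].
by apply: val_inj; rewrite /= l_last; have := ltn_ord j; lia.
Qed.

Lemma ord_lt_last_neq (j : 'I_n) : (j < n.-1)%N -> j != l.
Proof. by apply: contraTneq => ->; rewrite l_last ltnn. Qed.

Lemma kderivation_expand_last d r : is_der d ->
  (forall j : 'I_n, (j < n.-1)%N -> partial j r = 0) -> d r = d (x l) * partial l r.
Proof.
move=> Hd r_const; rewrite (kderivation_expand Hd) (bigD1 l) //= big1 ?addr0 // => j.
by have [lt_j _|->] := ord_split_last j; [rewrite r_const ?mulr0 | rewrite eqxx].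
Qed.

Hypothesis coord_last_nonunit : forall r, x l * r != 1.
Hypothesis partial_last_antiderivative : forall v a, v * a = 1 ->
  (forall j, j != l -> partial j v = 0) ->
  exists f, partial l f = v /\ forall j, j != l -> partial j f = 0.
Hypothesis partial_simple : forall I, is_ideal I ->
  (forall i r, I r -> I (partial i r)) -> forall r, I r -> r != 0 -> I 1.

Section CommutingFamily.
Variable D : (R -> R) -> Prop.
Hypothesis D_kderivation : forall d, D d -> is_der d.
Hypothesis D_commute : forall d e, D d -> D e -> forall a, d (e a) = e (d a).
Hypothesis D_simple_ring : D_simple D.
Hypothesis D_partial : forall i : 'I_n, (i < n.-1)%N -> D (partial i).

Lemma partial_D_coord_eq0 d (i j : 'I_n) : D d -> (i < n.-1)%N -> partial i (d (x j)) = 0.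
Proof.
move=> Dd lt_i; rewrite -D_commute //; last exact: D_partial.
rewrite partial_coord.
exact: kderivation_nat (D_kderivation Dd).
Qed.

Lemma D_coord_last_darboux d e : D d -> D e -> e (d (x l)) = d (x l) * partial l (e (x l)).
Proof.
move=> Dd De; rewrite -(D_commute Dd De).
by rewrite (kderivation_expand_last (D_kderivation Dd)) // => j; apply: partial_D_coord_eq0.
Qed.

Lemma exists_D_coord_last_unit : exists2 d, D d & exists v, v * d (x l) = 1.
Proof.
have [[d Dd nz_dx]|all_zero] := pselect (exists2 d, D d & d (x l) != 0).
  exists d => //; have darboux e : D e -> exists c, e (d (x l)) = c * d (x l).
    by move=> De; exists (partial l (e (x l))); rewrite (D_coord_last_darboux Dd De) mulrC.
  by have [/eqP|//] := darboux_eq0_or_unit D_kderivation D_simple_ring darboux; rewrite (negbTE nz_dx).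
have darboux e : D e -> exists c, e (x l) = c * x l.
  move=> De; exists 0; rewrite mul0r; apply: contra_notP all_zero => nz.
  by exists e => //; apply/eqP.
case: (darboux_eq0_or_unit D_kderivation D_simple_ring darboux) => [x0|[s]].
  have := partial_coord l l; rewrite x0 eqxx kderivation0 //.
  by move/eqP; rewrite eq_sym oner_eq0.
by rewrite mulrC => /eqP; rewrite (negbTE (coord_last_nonunit s)).
Qed.

Section UnitCoordinateImage.
Variables (d : R -> R) (v : R).
Hypotheses (Dd : D d) (dxv : v * d (x l) = 1).

Lemma partial_inv_D_coord_eq0 (j : 'I_n) : (j < n.-1)%N -> partial j v = 0.
Proof.
move=> lt_j; have [_ _ pM] := partial_kderivation j.
have := pM v (d (x l)); rewrite dxv kderivation1 // partial_D_coord_eq0 // mulr0 add0r.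
by move=> dx_pv; rewrite -[partial j v]mulr1 -dxv mulrA mulrAC -dx_pv mul0r.
Qed.

Lemma partial_last_expand r :
  partial l r = v * d r - \sum_(j | j != l) v * d (x j) * partial j r.
Proof.
rewrite (kderivation_expand (D_kderivation Dd)) (bigD1 l) //= mulrDr mulrA dxv mul1r.
rewrite mulr_sumr (eq_bigr (fun j => v * d (x j) * partial j r)) ?addrK // => j _.
exact: mulrA.
Qed.

Lemma D_simple_replace_partial_last :
  D_simple (fun e => (exists2 i : 'I_n, (i < n.-1)%N & e = partial i) \/ e = d).
Proof.
move=> I I_ideal I_stable; have [_ ID IM] := I_ideal.
have stable_partial i r : I r -> I (partial i r).
  have [lt_i|->] := ord_split_last i => Ir.
    by apply: (I_stable (partial i)) => //; left; exists i.
  rewrite partial_last_expand; apply: ID.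
    by apply: IM; apply: (I_stable d) => //; right.
  apply: (ideal_opp I_ideal); apply: (ideal_sum _ I_ideal) => j ne_jl; apply: IM.
  have [lt_j|eq_jl] := ord_split_last j; last by rewrite eq_jl eqxx in ne_jl.
  by apply: (I_stable (partial j)) => //; left; exists j.
have [[r Ir nz_r]|I_eq0] := pselect (exists2 r, I r & r != 0).
  by right; apply: (ideal_eq1 I_ideal); exact: (partial_simple I_ideal stable_partial Ir nz_r).
left=> a; split=> [Ia|->]; last by case: I_ideal.
by apply: contra_notP I_eq0 => nz_a; exists a => //; apply/eqP.
Qed.

End UnitCoordinateImage.
End CommutingFamily.

Theorem corollary2p5_coordinates :
  corollary2p5_prop (@GRing.add R) (@GRing.mul R) 0 (@GRing.scale k R) 1 partial.
Proof.
move=> D D_der D_comm D_simple D_partial.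
have [d Dd [v dxv]] := exists_D_coord_last_unit D_der D_comm D_simple D_partial.
have [f [pf pf0]] : exists f, partial l f = v /\ forall j, j != l -> partial j f = 0.
  apply: (partial_last_antiderivative dxv) => j; have [lt_j _|->] := ord_split_last j; last by rewrite eqxx.
  exact: (partial_inv_D_coord_eq0 D_der D_comm D_partial Dd dxv lt_j).
exists d; split=> //; exists (fun i => if i == l then f else 0); split.
- move=> i /eqP eq_il; have -> : i = l by apply: val_inj; rewrite l_last.
  rewrite eqxx (kderivation_expand_last (D_der d Dd)) ?pf 1?mulrC // => j.
  by move/ord_lt_last_neq; apply: pf0.
- by move=> i /ord_lt_last_neq/negbTE->; apply: kderivation0 (D_der d Dd).
apply: (D_simple_replace_partial_last D_der Dd dxv).
Qed.

End Coordinates.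

Section Monomials.
Variable n : nat.
Implicit Types m : 'X_{1..n}.

Lemma mdeg_lem m1 m2 : (m1 <= m2)%MM -> (mdeg m1 <= mdeg m2)%N.
Proof. by move=> le_m; rewrite -(submK le_m) mdegD leq_addl. Qed.

Lemma mnm_neq0_exists m : m != 0%MM -> exists i, (U_(i) <= m)%MM.
Proof.
move=> nz_m; apply: contraNP nz_m => none; apply/eqP/mnmP => i.
by rewrite mnmE; apply: contra_notP none => nz_mi; exists i; rewrite lep1mP; apply/eqP.
Qed.

End Monomials.

Section Polynomials.
Variables (k : fieldType) (n : nat).
Hypothesis char_k : [pchar k] =i pred0.
Local Notation MR := {mpoly k[n]}.
Local Notation is_der := (is_kderivation (@GRing.add MR) (@GRing.mul MR) (@GRing.scale k MR)).

Lemma mderiv_kderivation i : is_der (mderiv i).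
Proof.
split=> [a b|c a|a b]; first exact: mderivD.
  exact: mderivZ.
by rewrite mderivM addrC.
Qed.

Lemma mderivXU (i j : 'I_n) : mderiv i 'X_j = (i == j)%:R :> MR.
Proof.
rewrite mderivX mnm1E eq_sym; case: eqP => [->|_]; last by rewrite scale0r.
have -> : (U_(j) - U_(j))%MM = 0%MM by apply/mnmP => t; rewrite mnmBE subnn !mnmE.
by rewrite mpolyX0 scale1r.
Qed.

Lemma mpoly_kderivation_eq0 d : is_der d -> (forall j, d 'X_j = 0) -> forall p : MR, d p = 0.
Proof.
move=> Hd dX; have [dD dZ dM] := Hd.
have dM0 a b : d a = 0 -> d b = 0 -> d (a * b) = 0.
  by move=> da db; rewrite dM da db mulr0 mul0r addr0.
have dXm m : d 'X_[m] = 0.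
  rewrite mpolyXE_id; elim/big_rec: _ => [|i p _ dp]; first exact: kderivation1.
  apply: (dM0 _ _ _ dp); elim: (m i) => [|e IHe]; first by rewrite expr0 kderivation1.
  by rewrite exprS dM0 ?dX.
elim/mpolyind => [|c m p _ _ dp]; first exact: kderivation0.
by rewrite dD dZ dp dXm scaler0 addr0.
Qed.

Lemma mpolyX_nonunit (l : 'I_n) (r : MR) : 'X_l * r != 1.
Proof.
apply/eqP => /(congr1 (meval (fun _ => 0 : k))).
by rewrite mevalM mevalXU mul0r meval1 => /eqP; rewrite eq_sym oner_eq0.
Qed.

Lemma mpoly_unit_antiderivative (l : 'I_n) (v a : MR) : v * a = 1 ->
  exists f, mderiv l f = v /\ forall j, j != l -> mderiv j f = 0.
Proof.
rewrite mulrC => /mpoly_intro_unit /andP[/eqP v_const _].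
exists ((v@_0)%:MP * 'X_l); split=> [|j /negbTE ne_jl];
  by rewrite mderivM mderivC mul0r add0r mderivXU ?eqxx ?ne_jl ?mulr1 ?mulr0.
Qed.

Lemma mderiv_coef_neq0 i (p : MR) m : p@_(m + U_(i)) != 0 -> (mderiv i p)@_m != 0.
Proof. by move=> nz; rewrite mcoeff_mderiv -mulr_natr mulf_neq0 // ((pcharf0P k).1 char_k). Qed.

Lemma mpoly_partial_simple I : is_ideal (@GRing.add MR) (@GRing.mul MR) 0 I ->
  (forall i r, I r -> I (mderiv i r)) -> forall r, I r -> r != 0 -> I 1.
Proof.
move=> I_ideal I_stable; have [_ _ IM] := I_ideal.
suff deg_ind N r : I r -> r != 0 -> (forall m, r@_m != 0 -> (mdeg m < N)%N) -> I 1.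
  move=> r Ir nz_r; apply: (deg_ind (msize r) r) => // m.
  by rewrite -mcoeff_msupp; apply: msize_mdeg_lt.
elim: N r => [|N IHN] r Ir nz_r r_deg.
  by case/eqP: nz_r; apply/mpolyP => m; rewrite mcoeff0; apply/eqP; apply: contraT => /r_deg.
have [[m nz_rm nz_m]|r_const] := pselect (exists2 m, r@_m != 0 & m != 0%MM).
  have [i le_im] := mnm_neq0_exists nz_m.
  apply: (IHN (mderiv i r)); first exact: I_stable.
    have := @mderiv_coef_neq0 i r (m - U_(i))%MM; rewrite submK // => /(_ nz_rm).
    by apply: contraNneq => ->; rewrite mcoeff0.
  move=> m'; rewrite mcoeff_mderiv => nz.
  have /r_deg : r@_(m' + U_(i)) != 0 by apply: contraNneq nz => ->; rewrite mul0rn.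
  by rewrite mdegD mdeg1 addn1 ltnS.
have r_eq : r = (r@_0)%:MP.
  apply/mpolyP => m; rewrite mcoeffC; have [<-|nz_m] := eqVneq 0%MM m; first by rewrite mulr1.
  by rewrite mulr0; apply: contra_notP r_const => nz; exists m; [apply/eqP | rewrite eq_sym].
have nz_r0 : r@_0 != 0 by apply: contraNneq nz_r => r00; rewrite r_eq r00 mpolyC0.
by have := IM ((r@_0)^-1)%:MP _ Ir; rewrite {2}r_eq -mpolyCM mulVf // mpolyC1.
Qed.

Theorem corollary2p5_mpoly : (1 <= n)%N ->
  corollary2p5_prop (@GRing.add MR) (@GRing.mul MR) 0 (@GRing.scale k MR) 1
    (fun i p => mderiv i p).
Proof.
move=> n_gt0; have lt_l : (n.-1 < n)%N by rewrite prednK.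
apply: (@corollary2p5_coordinates _ _ _ _ (fun j => 'X_j) _ _ _ (Ordinal lt_l)) => //.
- exact: mderiv_kderivation.
- exact: mderivXU.
- exact: mpoly_kderivation_eq0.
- exact: mpolyX_nonunit.
- by move=> v a /mpoly_unit_antiderivative.
- exact: mpoly_partial_simple.
Qed.

End Polynomials.

Section PowerSeriesRing.
Variables (k : fieldType) (n : nat).
Local Notation PS := (pseries k n).
Local Notation MR := {mpoly k[n]}.

HB.instance Definition _ := Choice.copy PS ('X_{1..n} -> k).

Definition ps_opp (f : PS) : PS := fun m => - f m.

Lemma ps_addA : associative (@ps_add k n).
Proof. by move=> f g h; apply/funext => m; rewrite /ps_add addrA. Qed.

Lemma ps_addC : commutative (@ps_add k n).
Proof. by move=> f g; apply/funext => m; rewrite /ps_add addrC. Qed.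

Lemma ps_add0 : left_id (@ps_zero k n) (@ps_add k n).
Proof. by move=> f; apply/funext => m; rewrite /ps_add /ps_zero add0r. Qed.

Lemma ps_addN : left_inverse (@ps_zero k n) ps_opp (@ps_add k n).
Proof. by move=> f; apply/funext => m; rewrite /ps_add /ps_opp /ps_zero addNr. Qed.

HB.instance Definition _ := GRing.isZmodule.Build PS ps_addA ps_addC ps_add0 ps_addN.

(* The ring laws of [pseries] are transferred from [{mpoly k[n]}]: a coefficient
   of degree [< N] only depends on coefficients of degree [< N]. *)
Definition agree_below N (P : MR) (f : PS) := forall m, (mdeg m < N)%N -> P@_m = f m.

Definition ps_trunc N (f : PS) : MR := \sum_(m : 'X_{1..n < N}) f m *: 'X_[m].

Lemma agree_trunc N f : agree_below N (ps_trunc N f) f.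
Proof.
move=> m lt_m; rewrite /ps_trunc raddf_sum /=.
under eq_bigr do rewrite mcoeffZ mcoeffX.
rewrite (bigD1 (BMultinom lt_m)) //= eqxx mulr1 big1 ?addr0 // => m' ne_m'.
by case: eqP => [eq_m|]; [case/eqP: ne_m'; apply: val_inj | rewrite mulr0].
Qed.

Lemma agree_below_eq N P Q f g m : agree_below N P f -> agree_below N Q g ->
  P = Q -> (mdeg m < N)%N -> f m = g m.
Proof. by move=> Pf Qg eqPQ lt_m; rewrite -Pf // -Qg // eqPQ. Qed.

Lemma agree_mul N P Q f g : agree_below N P f -> agree_below N Q g ->
  agree_below N (P * Q) (ps_mul f g).
Proof.
move=> Pf Qg m lt_m; rewrite (mcoeff_poly_mul_lin _ _ (ltnSn (mdeg m))).
apply: eq_bigr => m' le_m'; rewrite Pf ?Qg //.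
- by rewrite (leq_ltn_trans _ lt_m) // mdegB.
- by rewrite (leq_ltn_trans _ lt_m) // mdeg_lem.
Qed.

Lemma agree_add N P Q f g : agree_below N P f -> agree_below N Q g ->
  agree_below N (P + Q) (ps_add f g).
Proof. by move=> Pf Qg m lt_m; rewrite mcoeffD Pf ?Qg. Qed.

Lemma agree_one N : agree_below N 1 (@ps_one k n).
Proof. by move=> m _; rewrite mcoeff1 /ps_one; case: eqP. Qed.

Lemma ps_mulA : associative (@ps_mul k n).
Proof.
move=> f g h; apply/funext => m; pose N := (mdeg m).+1; pose tr := ps_trunc N.
apply: (agree_below_eq _ _ (mulrA (tr f) (tr g) (tr h))) (ltnSn _);
  by do !apply: agree_mul; apply: agree_trunc.
Qed.

Lemma ps_mulC : commutative (@ps_mul k n).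
Proof.
move=> f g; apply/funext => m; pose N := (mdeg m).+1; pose tr := ps_trunc N.
apply: (agree_below_eq _ _ (mulrC (tr f) (tr g))) (ltnSn _);
  by apply: agree_mul; apply: agree_trunc.
Qed.

Lemma ps_mul1 : left_id (@ps_one k n) (@ps_mul k n).
Proof.
move=> f; apply/funext => m; pose N := (mdeg m).+1.
apply: (agree_below_eq _ (@agree_trunc N f) (mul1r (ps_trunc N f))) (ltnSn _).
exact: agree_mul (@agree_one N) (@agree_trunc N f).
Qed.

Lemma ps_mulDl : left_distributive (@ps_mul k n) (@ps_add k n).
Proof.
move=> f g h; apply/funext => m; pose N := (mdeg m).+1; pose tr := ps_trunc N.
apply: (agree_below_eq _ _ (mulrDl (tr f) (tr g) (tr h))) (ltnSn _);
  by do ![apply: agree_mul | apply: agree_add | apply: agree_trunc].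
Qed.

Lemma ps_one_neq0 : (@ps_one k n : PS) != 0.
Proof.
apply/eqP => /(congr1 (fun f : PS => f 0%MM)).
by rewrite /ps_one eqxx => /eqP; rewrite oner_eq0.
Qed.

HB.instance Definition _ :=
  GRing.Zmodule_isComNzRing.Build PS ps_mulA ps_mulC ps_mul1 ps_mulDl ps_one_neq0.

Lemma ps_scaleA a b (f : PS) : ps_scale a (ps_scale b f) = ps_scale (a * b) f.
Proof. by apply/funext => m; rewrite /ps_scale mulrA. Qed.

Lemma ps_scale1 : left_id 1 (@ps_scale k n).
Proof. by move=> f; apply/funext => m; rewrite /ps_scale mul1r. Qed.

Lemma ps_scaleDr : right_distributive (@ps_scale k n) (@ps_add k n).
Proof. by move=> a f g; apply/funext => m; rewrite /ps_scale /ps_add mulrDr. Qed.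

Lemma ps_scaleDl (f : PS) : {morph (@ps_scale k n)^~ f : a b / a + b >-> ps_add a b}.
Proof. by move=> a b; apply/funext => m; rewrite /ps_scale /ps_add mulrDl. Qed.

HB.instance Definition _ :=
  GRing.Zmodule_isLmodule.Build k PS ps_scaleA ps_scale1 ps_scaleDr ps_scaleDl.

Lemma ps_scaleAl (a : k) (f g : PS) : a *: (f * g) = (a *: f) * g.
Proof.
change (ps_scale a (ps_mul f g) = ps_mul (ps_scale a f) g).
apply/funext => m; rewrite /ps_scale /ps_mul mulr_sumr.
by apply: eq_bigr => m' _; rewrite mulrA.
Qed.

HB.instance Definition _ := GRing.Lmodule_isLalgebra.Build k PS ps_scaleAl.
HB.instance Definition _ := GRing.Lalgebra_isComAlgebra.Build k PS.

End PowerSeriesRing.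

Section PowerSeries.
Variables (k : fieldType) (n : nat).
Hypothesis char_k : [pchar k] =i pred0.
Local Notation PS := (pseries k n).
Local Notation MR := {mpoly k[n]}.
Local Notation is_der := (is_kderivation (@GRing.add PS) (@GRing.mul PS) (@GRing.scale k PS)).

Lemma natr_succ_neq0 e : (e.+1%:R : k) != 0.
Proof. by rewrite ((pcharf0P k).1 char_k). Qed.

Lemma ps_sumE (I : Type) (r : seq I) (P : pred I) (F : I -> PS) m :
  (\sum_(i <- r | P i) F i) m = \sum_(i <- r | P i) F i m.
Proof. by elim/big_rec2: _ => // i y1 y2 _ <-. Qed.

Lemma ps_mulE (f g : PS) m : (f * g) m =
  \sum_(m' : 'X_{1..n < (mdeg m).+1} | (m' <= m)%MM) f m' * g (m - m')%MM.
Proof. by []. Qed.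

Definition ps_of_mpoly (P : MR) : PS := fun m => P@_m.

Lemma ps_of_mpoly_bool (b : bool) : ps_of_mpoly b%:R = b%:R.
Proof.
apply/funext => m; case: b; rewrite /ps_of_mpoly /=; last by rewrite mcoeff0.
by rewrite mcoeff1; change ((m == 0%MM)%:R = @ps_one k n m); rewrite /ps_one; case: eqP.
Qed.

Lemma ps_deriv_of_mpoly i P : ps_deriv i (ps_of_mpoly P) = ps_of_mpoly (mderiv i P).
Proof. by apply/funext => m; rewrite /ps_deriv /ps_of_mpoly mcoeff_mderiv mulr_natl. Qed.

Lemma agree_below_le N M P (f : PS) : (N <= M)%N -> agree_below M P f -> agree_below N P f.
Proof. by move=> le_NM Pf m lt_m; apply: Pf; apply: leq_trans lt_m le_NM. Qed.

Lemma agree_deriv N i P (f : PS) :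
  agree_below N.+1 P f -> agree_below N (mderiv i P) (ps_deriv i f).
Proof.
move=> Pf m lt_m; rewrite mcoeff_mderiv /ps_deriv Pf ?mulr_natl //.
by rewrite mdegD mdeg1 addn1 ltnS.
Qed.

Lemma ps_deriv_kderivation i : is_der (ps_deriv i).
Proof.
split=> [f g|c f|f g]; apply/funext => m.
- by rewrite /ps_deriv /= /ps_add mulrDr.
- by rewrite /ps_deriv /= /ps_scale mulrCA.
pose N := (mdeg m).+1; have tf := @agree_trunc _ _ N.+1 f; have tg := @agree_trunc _ _ N.+1 g.
have lhs := agree_deriv i (agree_mul tf tg).
have rhs := agree_add (agree_mul (agree_below_le (leqnSn _) tf) (agree_deriv i tg))
                      (agree_mul (agree_deriv i tf) (agree_below_le (leqnSn _) tg)).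
by apply: agree_below_eq lhs rhs _ (ltnSn _); rewrite mderivM addrC.
Qed.

Lemma ps_derivXU i j : ps_deriv i (ps_of_mpoly 'X_j) = (i == j)%:R.
Proof. by rewrite ps_deriv_of_mpoly mderivXU ps_of_mpoly_bool. Qed.

Lemma ps_mulX_coef j (g : PS) m :
  (ps_of_mpoly 'X_j * g) m = if (U_(j) <= m)%MM then g (m - U_(j))%MM else 0.
Proof.
rewrite ps_mulE /ps_of_mpoly; under eq_bigr do rewrite mcoeffX.
case: ifPn => [le_jm|not_le_jm].
  have lt_j : (mdeg U_(j) < (mdeg m).+1)%N by rewrite ltnS mdeg_lem.
  rewrite (bigD1 (BMultinom lt_j)) //= eqxx mul1r big1 ?addr0 // => m' /andP[_ ne_m'].
  by case: eqP => [eq_m'|_]; [case/eqP: ne_m'; apply: val_inj | rewrite mul0r].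
rewrite big1 // => m' le_m'm; case: eqP => [eq_m'|_]; last by rewrite mul0r.
by move: not_le_jm; rewrite eq_m' le_m'm.
Qed.

Lemma psX_nonunit l (r : PS) : ps_of_mpoly 'X_l * r != 1.
Proof.
apply/eqP => /(congr1 (fun f : PS => f 0%MM)) /=; rewrite ps_mulX_coef.
rewrite lep1mP mnmE eqxx; change (0 = @ps_one k n 0%MM -> False).
by rewrite /ps_one eqxx => /eqP; rewrite eq_sym oner_eq0.
Qed.

(* Euler's identity [mdeg m * s_m = \sum_j m_j s_m] lets us split off every
   coordinate; this needs the characteristic to be zero. *)
Definition ps_euler_part (s : PS) (j : 'I_n) : PS :=
  fun m => ((m j).+1%:R / (mdeg m).+1%:R) * s (m + U_(j))%MM.

Lemma ps_euler_decomp (s : PS) :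
  s = s 0%MM *: 1 + \sum_j ps_of_mpoly 'X_j * ps_euler_part s j.
Proof.
apply/funext => m.
have -> : (s 0%MM *: 1 + \sum_j ps_of_mpoly 'X_j * ps_euler_part s j) m =
    s 0%MM * @ps_one k n m + \sum_j (ps_of_mpoly 'X_j * ps_euler_part s j) m.
  by rewrite -(ps_sumE _ _ (fun j => ps_of_mpoly 'X_j * ps_euler_part s j)).
have part_coef j : (ps_of_mpoly 'X_j * ps_euler_part s j) m = (m j)%:R / (mdeg m)%:R * s m.
  rewrite ps_mulX_coef; case: ifPn => [le_jm|]; last by rewrite lep1mP negbK => /eqP->; rewrite !mul0r.
  have mj : ((m - U_(j))%MM j).+1 = m j by rewrite mnmBE mnm1E eqxx subn1 prednK // lt0n -lep1mP.
  have dm : (mdeg (m - U_(j))%MM).+1 = mdeg m by rewrite -{2}(submK le_jm) mdegD mdeg1 addn1.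
  by rewrite /ps_euler_part submK // mj dm.
rewrite (eq_bigr _ (fun j _ => part_coef j)) -!mulr_suml -natr_sum -mdegE.
have [->|nz_m] := eqVneq m 0%MM; first by rewrite mdeg0 !mul0r addr0 /ps_one eqxx mulr1.
rewrite /ps_one (negbTE nz_m) mulr0 add0r divff ?mul1r //.
by rewrite ((pcharf0P k).1 char_k) mdeg_eq0.
Qed.

Lemma ps_kderivation_eq0 d : is_der d ->
  (forall j, d (ps_of_mpoly 'X_j) = 0) -> forall s, d s = 0.
Proof.
move=> Hd dX; have [dD dZ dM] := Hd.
have d_decomp s : d s = \sum_j ps_of_mpoly 'X_j * d (ps_euler_part s j).
  rewrite {1}(ps_euler_decomp s) dD dZ kderivation1 // scaler0 add0r kderivation_sum //.
  by apply: eq_bigr => j _; rewrite dM dX mul0r addr0.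
suff ds_deg N s m : (mdeg m < N)%N -> d s m = 0.
  by move=> s; apply/funext => m; apply: (ds_deg _ s m (ltnSn _)).
elim: N s m => [//|N IHN] s m lt_m.
rewrite d_decomp ps_sumE big1 // => j _; rewrite ps_mulX_coef; case: ifP => // le_jm.
by apply: IHN; move: lt_m; rewrite -{1}(submK le_jm) mdegD mdeg1 addn1 ltnS.
Qed.

Lemma ps_antiderivative l (v : PS) : (forall j, j != l -> ps_deriv j v = 0) ->
  exists f, ps_deriv l f = v /\ forall j, j != l -> ps_deriv j f = 0.
Proof.
move=> v_const; pose f : PS := fun m => if m l == 0%N then 0 else v (m - U_(l))%MM / (m l)%:R.
exists f; split=> [|j ne_jl]; apply/funext => m; rewrite /ps_deriv /f mnmDE mnm1E.
  by rewrite eqxx addn1 /= addmK mulrCA divff ?mulr1 // natr_succ_neq0.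
rewrite (negbTE ne_jl) addn0; case: eqP => [_|_]; first by rewrite mulr0.
have := congr1 (fun g : PS => g (m - U_(l))%MM) (v_const j ne_jl).
rewrite /ps_deriv /= => /eqP; rewrite mulf_eq0 (negbTE (natr_succ_neq0 _)) /= => /eqP v0.
suff -> : (m + U_(j) - U_(l))%MM = (m - U_(l) + U_(j))%MM by rewrite v0 mul0r mulr0.
apply/mnmP => t; rewrite !(mnmDE, mnmBE, mnm1E).
by have [<-|ne_lt] := eqVneq l t; [rewrite (negbTE ne_jl) !addn0 | rewrite !subn0].
Qed.

Lemma ps_exp_coef_eq0 (h : PS) e m : h 0%MM = 0 -> (mdeg m < e)%N -> (h ^+ e) m = 0.
Proof.
move=> h0; elim: e m => [//|e IHe] m lt_m; rewrite exprS ps_mulE big1 // => m' le_m'm.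
have [->|nz_m'] := eqVneq (val m') 0%MM; first by rewrite h0 mul0r.
rewrite IHe ?mulr0 //; have := mdeg_eq0 m'; rewrite (negbTE nz_m').
by move: lt_m; rewrite -{1}(submK le_m'm) mdegD; case: (mdeg (val m')) => //; lia.
Qed.

(* [u = c (1 - h)] with [h] of zero constant term, so [u^-1 = c^-1 \sum_e h^e],
   and the coefficient of degree [N] only involves the powers [e <= N]. *)
Lemma ps_invertible (u : PS) : u 0%MM != 0 -> exists w, w * u = 1.
Proof.
move=> u0; pose c := u 0%MM; pose h : PS := 1 - c^-1 *: u.
have h0 : h 0%MM = 0.
  by change (@ps_one k n 0%MM - c^-1 * u 0%MM = 0); rewrite /ps_one eqxx mulVf ?subrr.
have u_eq : u = c *: (1 - h) by rewrite /h opprB addrC subrK scalerA mulfV // scale1r.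
pose w : PS := fun m => c^-1 * \sum_(e < (mdeg m).+1) (h ^+ e) m.
exists w; apply/funext => m; pose G N := \sum_(e < N) h ^+ e.
have geom N : (c^-1 *: G N) * u = 1 - h ^+ N.
  rewrite u_eq -scalerAl -scalerAr scalerA mulVf // scale1r.
  by rewrite mulrC -[1 - h]opprB mulNr -subrX1 opprB.
have w_trunc m' : (m' <= m)%MM -> w m' = (c^-1 *: G (mdeg m).+1) m'.
  move=> le_m'm; change (w m' = c^-1 * G (mdeg m).+1 m'); rewrite /w /G ps_sumE.
  have le_deg : ((mdeg m').+1 <= (mdeg m).+1)%N by rewrite ltnS mdeg_lem.
  congr (_ * _); rewrite (big_ord_widen _ (fun e => (h ^+ e) m') le_deg).
  rewrite [RHS](bigID (fun e : 'I__ => (e < (mdeg m').+1)%N)) /= [X in _ = _ + X]big1 ?addr0 // => e.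
  by rewrite -leqNgt => le_e; apply: ps_exp_coef_eq0.
have -> : (w * u) m = ((c^-1 *: G (mdeg m).+1) * u) m.
  by rewrite !ps_mulE; apply: eq_bigr => m' le_m'm; rewrite w_trunc.
rewrite geom; change (@ps_one k n m - (h ^+ (mdeg m).+1) m = @ps_one k n m).
by rewrite ps_exp_coef_eq0 ?subr0.
Qed.

Lemma ps_partial_simple I : is_ideal (@GRing.add PS) (@GRing.mul PS) 0 I ->
  (forall i s, I s -> I (ps_deriv i s)) -> forall s, I s -> s != 0 -> I 1.
Proof.
move=> I_ideal I_stable; have [_ _ IM] := I_ideal.
suff deg_ind N s m : I s -> s m != 0 -> mdeg m = N -> I 1.
  move=> s Is nz_s; have [m nz_sm] : exists m, s m != 0.
    apply: contraNP nz_s => s0; apply/eqP/funext => m.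
    by apply: contra_notP s0 => nz; exists m; apply/eqP.
  exact: deg_ind Is nz_sm erefl.
elim: N s m => [|N IHN] s m Is nz_sm deg_m.
  have [w ws] : exists w, w * s = 1.
    by apply: ps_invertible; move/eqP: deg_m; rewrite mdeg_eq0 => /eqP <-.
  by rewrite -ws; apply: IM.
have [i le_im] : exists i, (U_(i) <= m)%MM by apply: mnm_neq0_exists; rewrite -mdeg_eq0 deg_m.
apply: (IHN (ps_deriv i s) (m - U_(i))%MM); first exact: I_stable.
  by rewrite /ps_deriv submK // mulf_eq0 negb_or natr_succ_neq0.
by move: deg_m; rewrite -{1}(submK le_im) mdegD mdeg1 addn1 => -[].
Qed.

Theorem corollary2p5_pseries : (1 <= n)%N ->
  corollary2p5_prop (@ps_add k n) (@ps_mul k n) (@ps_zero k n) (@ps_scale k n) (@ps_one k n)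
    (@ps_deriv k n).
Proof.
move=> n_gt0; have lt_l : (n.-1 < n)%N by rewrite prednK.
apply: (@corollary2p5_coordinates _ _ _ _ (fun j => ps_of_mpoly 'X_j) _ _ _ (Ordinal lt_l)) => //.
- exact: ps_deriv_kderivation.
- exact: ps_derivXU.
- exact: ps_kderivation_eq0.
- exact: psX_nonunit.
- by move=> v a _; apply: ps_antiderivative.
- exact: ps_partial_simple.
Qed.

End PowerSeries.

Theorem corollary2p5 (k : fieldType) (n : nat) :
  [pchar k] =i pred0 -> (1 <= n)%N ->
  corollary2p5_prop (@GRing.add {mpoly k[n]}) (@GRing.mul {mpoly k[n]})
    0 (@GRing.scale k {mpoly k[n]}) 1 (fun i p => mderiv i p)
  /\
  corollary2p5_prop (@ps_add k n) (@ps_mul k n) (@ps_zero k n)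
    (@ps_scale k n) (@ps_one k n) (@ps_deriv k n).
Proof.
by move=> char_k n_gt0; split; [apply: corollary2p5_mpoly | apply: corollary2p5_pseries].
Qed.
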